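(* Let ${\mathcal M}$ be a GLP-algebra and $n<\omega$, and suppose ${\mathcal M}$ enjoys the $\langle n\rangle$-reduction property. Then for every $\phi\in{\mathcal M}$, $$\{Q_n^k(\phi):k<\omega\}\vdash_{\Pi_{n+1}({\mathcal M})}\langle n+1\rangle\phi,$$ i.e. for every $z\in\Pi_{n+1}({\mathcal M})$, if $\langle n+1\rangle\phi\le z$ then there is $k<\omega$ with $Q_n^k(\phi)\le z$.
   Context: A GLP-algebra is a boolean algebra ${\mathcal M}$ with unary operations $\langle n\rangle$, $n<\omega$, satisfying for all $x,y$: (i) $\langle n\rangle(x\vee y)=\langle n\rangle x\vee\langle n\rangle y$; (ii) $\langle n\rangle 0=0$; (iii) $\langle n\rangle x=\langle n\rangle(x\wedge\neg\langle n\rangle x)$; (iv) $\langle n\rangle x\le\langle m\rangle x$ for $m\le n$; (v) $\langle m\rangle x\le[n]\langle m\rangle x$ for $m<n$, where $[n]x:=\neg\langle n\rangle\neg x$. Define $Q_n^0(x)=\top$, $Q_n^{k+1}(x)=\langle n\rangle(x\wedge Q_n^k(x))$. For $A\subseteq{\mathcal M}$, $A\vdash x$ means there are $a_1,\dots,a_k\in A$ with $a_1\wedge\dots\wedge a_k\le x$; $A\vdash B$ means $A\vdash x$ for all $x\in B$; a single element stands for the singleton. $A\vdash_n B$ means: for all $z\in{\mathcal M}$, $B\vdash\langle n\rangle z$ implies $A\vdash\langle n\rangle z$. ${\mathcal M}$ enjoys the $\langle n\rangle$-reduction property if for all $x\in{\mathcal M}$, $\{Q_n^k(x):k<\omega\}\vdash_n\langle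 n+1\rangle x$. $\Pi_{n+1}({\mathcal M})$ is the closure under $\vee,\wedge$ of $\{\top,\bot\}\cup\{\langle k\rangle z:k\le n,z\in{\mathcal M}\}\cup\{[k]z:k<n,z\in{\mathcal M}\}$. $A\vdash_{\Pi_{n+1}({\mathcal M})}B$ means: for all $z\in\Pi_{n+1}({\mathcal M})$, $B\vdash z$ implies $A\vdash z$. *)

(* a boolean algebra is a ctbDistrLatticeType
   (complemented distributive lattice with top and bottom). *)
From HB Require Import structures.
From mathcomp Require Import all_boot all_order.
Set Implicit Arguments. Unset Strict Implicit. Unset Printing Implicit Defensive.
Import Order.TTheory.
Local Open Scope order_scope.

Record GLPalgebra (disp : Order.disp_t) (T : ctbDistrLatticeType disp) := {
  dia : nat -> T -> T;
  dia_join : forall n x y, dia n (x `|` y) = dia n x `|` dia n y;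
  dia_bot : forall n, dia n \bot = \bot;
  dia_loeb : forall n x, dia n x = dia n (x `&` ~` dia n x);
  dia_mono_idx : forall m n x, (m <= n)%N -> dia n x <= dia m x;
  dia_box : forall m n x, (m < n)%N -> dia m x <= ~` dia n (~` dia m x)
}.

Section Defs.
Context {disp : Order.disp_t} {T : ctbDistrLatticeType disp} (M : GLPalgebra T).

Definition box (n : nat) (x : T) : T := ~` dia M n (~` x).

Fixpoint Q (n k : nat) (x : T) : T :=
  match k with
  | 0 => \top
  | k'.+1 => dia M n (x `&` Q n k' x)
  end.

Definition derives (A : T -> Prop) (x : T) : Prop :=
  exists s : seq T, (forall a, a \in s -> A a) /\ \meet_(a <- s) a <= x.

Definition derives_set (A B : T -> Prop) : Prop := forall x, B x -> derives A x.

Definition derives_n (n : nat) (A B : T -> Prop) : Prop :=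
  forall z, derives B (dia M n z) -> derives A (dia M n z).

Definition Qset (n : nat) (x : T) : T -> Prop := fun a => exists k, a = Q n k x.

Definition singleton (b : T) : T -> Prop := fun a => a = b.

Definition reduction_property (n : nat) : Prop :=
  forall x, derives_n n (Qset n x) (singleton (dia M n.+1 x)).

(* Pi_{n+1}(M): closure under join/meet of top, bot, <k>z (k <= n), [k]z (k < n) *)
Inductive PiS (n : nat) : T -> Prop :=
  | PiS_top : PiS n \top
  | PiS_bot : PiS n \bot
  | PiS_dia : forall k z, (k <= n)%N -> PiS n (dia M k z)
  | PiS_box : forall k z, (k < n)%N -> PiS n (box k z)
  | PiS_join : forall x y, PiS n x -> PiS n y -> PiS n (x `|` y)
  | PiS_meet : forall x y, PiS n x -> PiS n y -> PiS n (x `&` y).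

Definition derives_PiS (n : nat) (A B : T -> Prop) : Prop :=
  forall z, PiS n z -> derives B z -> derives A z.

End Defs.

From mathcomp Require Import all_boot all_order.
Set Implicit Arguments. Unset Strict Implicit. Unset Printing Implicit Defensive.
Import Order.Theory.
Local Open Scope order_scope.

(* Every element of Pi_{n+1} is a finite meet of clauses ~b \/ d, where b is a
   meet of boxes [k] (k < n) and d a join of diamonds <k> (k <= n); the set of
   z with "<n+1>phi <= z implies Q_n^k(phi) <= z for some k" is closed under
   meets, so it suffices to treat one clause. If <n+1>phi <= ~b \/ d, put
   phi' := phi /\ b. Since <n+1>b <= b, we get <n+1>phi' <= d, and then
   <n+1>phi' <= <n>w for some <n>w <= d; the reduction property gives
   Q_n^k(phi') <= d, and b <= [n]b yields Q_n^k(phi) /\ b <= Q_n^k(phi'). *)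

Lemma leI_compl_join disp (T : ctbDistrLatticeType disp) (x b d : T) :
  (x `&` b <= d) = (x <= ~` b `|` d).
Proof. by rewrite -[b in LHS]complK -diffE leBLR. Qed.

Section GLPAlgebra.
Context {disp : Order.disp_t} {T : ctbDistrLatticeType disp} (M : GLPalgebra T).
Local Notation D := (dia M).
Local Notation B := (box M).

Lemma dia_mono m : {homo D m : x y / x <= y}.
Proof. by move=> x y /join_idPr <-; rewrite dia_join leUl. Qed.

(* Transitivity <m><m>a <= <m>a, derived from the Loeb axiom applied to a \/ <m>a. *)
Lemma dia_dia_le m (a : T) : D m (D m a) <= D m a.
Proof.
set x := a `|` D m a.
have le_xa : D m x <= D m a.
  rewrite dia_loeb; apply: dia_mono.
  by rewrite leI_compl_join complK joinC leU2 // dia_mono // leUl.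
by apply: le_trans le_xa; apply: dia_mono; rewrite leUr.
Qed.

Lemma box_dia_le m (u v : T) : B m u `&` D m v <= D m (u `&` v).
Proof.
rewrite meetC leI_compl_join /box complK.
have {1}-> : v = (v `&` u) `|` (v `&` ~` u) by rewrite -meetUr joinxC meetx1.
rewrite dia_join joinC leU2 // dia_mono //; first by rewrite leIr.
by rewrite meetC.
Qed.

Lemma box_meet m (x y : T) : B m x `&` B m y = B m (x `&` y).
Proof. by rewrite /box -complU -dia_join complI. Qed.

Lemma box_top m : B m \top = \top.
Proof. by rewrite /box compl1 dia_bot compl0. Qed.

Lemma derives_singletonP (b z : T) : derives (singleton b) z <-> b <= z.
Proof.
split=> [[s [sb le_sz]]|le_bz]; last first.
  by exists [:: b]; split=> [a|]; [rewrite inE => /eqP|rewrite big_seq1].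
by apply: le_trans le_sz; apply/meetsP_seq => a /sb -> _.
Qed.

Section FixedLevel.
Variable n : nat.

Lemma Q_antimono (x : T) k K : (k <= K)%N -> Q M n K x <= Q M n k x.
Proof.
elim: K k => [|K IH] [|k] //= le_kK; rewrite ?lex1 //.
by apply: dia_mono; rewrite leI2 // IH.
Qed.

Lemma Q_le_meet (x a b : T) k K :
  Q M n k x <= a -> Q M n K x <= b -> Q M n (maxn k K) x <= a `&` b.
Proof.
move=> le_ka le_Kb; rewrite lexI.
rewrite (le_trans (Q_antimono _ (leq_maxl k K))) //=.
exact: le_trans (Q_antimono _ (leq_maxr k K)) le_Kb.
Qed.

Lemma derives_QsetP (x z : T) : derives (Qset M n x) z <-> exists K, Q M n K x <= z.
Proof.
split=> [[s [sQ le_sz]]|[K le_Kz]]; last first.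
  exists [:: Q M n K x]; split=> [a|]; last by rewrite big_seq1.
  by rewrite inE => /eqP ->; exists K.
suff [K le_Ks] : exists K, Q M n K x <= \meet_(a <- s) a.
  by exists K; apply: le_trans le_sz.
elim: s sQ {le_sz} => [|a s IH] sQ; first by exists 0%N; rewrite big_nil lex1.
have [K le_Ks] := IH (fun b bs => sQ b (mem_behead (s := a :: s) bs)).
have [k ->] := sQ a (mem_head a s).
by exists (maxn k K); rewrite big_cons Q_le_meet.
Qed.

Lemma reduction_dia_le : reduction_property M n ->
  forall x w, D n.+1 x <= D n w -> exists K, Q M n K x <= D n w.
Proof.
by move=> red x w le_xw; apply/derives_QsetP/red/derives_singletonP.
Qed.

Lemma Q_meet_box_stable (x b : T) K :
  b <= B n b -> Q M n K x `&` b <= Q M n K (x `&` b).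
Proof.
move=> le_bBb; elim: K => [|K IH] /=; first exact: leIl.
rewrite meetC; apply: le_trans (leI2 le_bBb (lexx _)) _.
apply: le_trans (box_dia_le _ _ _) _; apply: dia_mono.
have le_x : b `&` (x `&` Q M n K x) <= x by rewrite leIx2 // leIl orbT.
have le_Q : b `&` (x `&` Q M n K x) <= Q M n K x by rewrite leIx2 // leIr orbT.
by rewrite lexI !lexI le_x leIl (le_trans _ IH) // lexI le_Q leIl.
Qed.

(* The only properties of a join of diamonds <k>, k <= n, that the argument uses. *)
Definition dia_bounded (d : T) :=
  exists w, D n w <= d /\ forall x, D n.+1 x `&` d <= D n w.

(* The only properties of a meet of boxes [k], k < n, that the argument uses. *)
Definition box_stable (b : T) := b <= B n b /\ D n.+1 b <= b.

Definition pi_clause (c : T) :=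
  exists d b, [/\ dia_bounded d, box_stable b & c = ~` b `|` d].

Inductive pi_cnf : T -> Prop :=
| pi_cnf_clause c : pi_clause c -> pi_cnf c
| pi_cnf_meet x y : pi_cnf x -> pi_cnf y -> pi_cnf (x `&` y).

Lemma dia_bounded_bot : dia_bounded \bot.
Proof. by exists \bot; rewrite dia_bot; split=> // x; rewrite meetx0. Qed.

Lemma dia_bounded_join d1 d2 :
  dia_bounded d1 -> dia_bounded d2 -> dia_bounded (d1 `|` d2).
Proof.
move=> [w1 [le_w1 bd1]] [w2 [le_w2 bd2]].
exists (w1 `|` w2); rewrite dia_join leU2 //; split=> // x.
by rewrite meetUr leU2.
Qed.

Lemma dia_bounded_dia k a : (k <= n)%N -> dia_bounded (D k a).
Proof.
rewrite leq_eqVlt => /orP [/eqP ->|lt_kn].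
  by exists a; split=> // x; rewrite leIr.
have lt_kn1 : (k < n.+1)%N by apply: ltnW.
exists (D k a); split.
  exact: le_trans (dia_mono_idx M _ (ltnW lt_kn)) (dia_dia_le _ _).
move=> x; rewrite meetC (le_trans (leI2 (dia_box _ _ lt_kn1) (lexx _))) //.
rewrite (le_trans (box_dia_le _ _ _)) // (le_trans _ (dia_mono_idx M _ (leqnSn n))) //.
by rewrite dia_mono // leIl.
Qed.

Lemma box_stable_top : box_stable \top.
Proof. by rewrite /box_stable box_top lex1. Qed.

Lemma box_stable_bot : box_stable \bot.
Proof. by rewrite /box_stable dia_bot !le0x. Qed.

Lemma box_stable_meet b1 b2 :
  box_stable b1 -> box_stable b2 -> box_stable (b1 `&` b2).
Proof.
move=> [Bb1 Db1] [Bb2 Db2]; split; first by rewrite -box_meet leI2.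
by rewrite lexI !(le_trans _ Db1, le_trans _ Db2) // dia_mono // (leIl, leIr).
Qed.

Lemma box_stable_dia k a : (k < n)%N -> box_stable (D k a).
Proof.
move=> lt_kn; split; first exact: dia_box.
exact: le_trans (dia_mono_idx M _ (leqW (ltnW lt_kn))) (dia_dia_le _ _).
Qed.

Lemma pi_clause_join c1 c2 : pi_clause c1 -> pi_clause c2 -> pi_clause (c1 `|` c2).
Proof.
move=> [d1 [b1 [bd1 sb1 ->]]] [d2 [b2 [bd2 sb2 ->]]].
exists (d1 `|` d2), (b1 `&` b2); split.
- exact: dia_bounded_join.
- exact: box_stable_meet.
- by rewrite complI joinACA.
Qed.

Lemma pi_cnf_join x y : pi_cnf x -> pi_cnf y -> pi_cnf (x `|` y).
Proof.
elim=> [c cc|x1 x2 _ IH1 _ IH2] cy; last first.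
  by rewrite joinIl; apply: pi_cnf_meet; [apply: IH1|apply: IH2].
elim: cy => [c' cc'|y1 y2 _ IH1 _ IH2]; last by rewrite joinIr; apply: pi_cnf_meet.
by apply/pi_cnf_clause/pi_clause_join.
Qed.

Lemma pi_clause_of (d b : T) :
  dia_bounded d -> box_stable b -> pi_cnf (~` b `|` d).
Proof. by move=> bd sb; apply: pi_cnf_clause; exists d, b. Qed.

Lemma PiS_cnf z : PiS M n z -> pi_cnf z.
Proof.
elim=> {z} [||k a le_kn|k a lt_kn|x y _ cx _ cy|x y _ cx _ cy].
- by rewrite -[\top]joinx0 -compl0; apply: pi_clause_of dia_bounded_bot box_stable_bot.
- by rewrite -[\bot]joinx0 -{1}compl1; apply: pi_clause_of dia_bounded_bot box_stable_top.
- rewrite -[D k a]join0x -compl1.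
  exact: pi_clause_of (dia_bounded_dia _ le_kn) box_stable_top.
- rewrite /box -[~` D k _]joinx0.
  exact: pi_clause_of dia_bounded_bot (box_stable_dia _ lt_kn).
- exact: pi_cnf_join.
- exact: pi_cnf_meet.
Qed.

Definition Q_conservative (z : T) :=
  forall x, D n.+1 x <= z -> exists K, Q M n K x <= z.

Hypothesis red : reduction_property M n.

Lemma pi_clause_conservative c : pi_clause c -> Q_conservative c.
Proof.
move=> [d [b [[w [le_wd bd]] [Bb Db] ->]]] x le_xc.
have le_xb : D n.+1 (x `&` b) <= D n.+1 x `&` b.
  by rewrite lexI dia_mono ?leIl ?(le_trans _ Db) ?dia_mono ?leIr.
have le_xb_d : D n.+1 (x `&` b) <= d.
  by apply: le_trans le_xb _; rewrite leI_compl_join.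
have [K le_Kw] : exists K, Q M n K (x `&` b) <= D n w.
  apply: reduction_dia_le => //; apply: le_trans (bd (x `&` b)).
  by rewrite lexI lexx le_xb_d.
exists K; rewrite -leI_compl_join.
exact: le_trans (Q_meet_box_stable _ _ Bb) (le_trans le_Kw le_wd).
Qed.

Lemma pi_cnf_conservative z : pi_cnf z -> Q_conservative z.
Proof.
elim=> [c /pi_clause_conservative //|y1 y2 _ cons1 _ cons2] x.
rewrite lexI => /andP [/cons1 [k le_k] /cons2 [K le_K]].
by exists (maxn k K); apply: Q_le_meet.
Qed.

End FixedLevel.
End GLPAlgebra.

Theorem theorem2 (disp : Order.disp_t) (T : ctbDistrLatticeType disp)
  (M : GLPalgebra T) (n : nat) :
  reduction_property M n ->
  forall phi : T,
    derives_PiS M n (Qset M n phi) (singleton (dia M n.+1 phi)).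
Proof.
move=> red phi z Pz /derives_singletonP le_phi_z.
apply/derives_QsetP.
exact: pi_cnf_conservative red _ (PiS_cnf Pz) _ le_phi_z.
Qed.
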